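(* Let $X$ be a set of reals. Then $B(X)$ satisfies $S_{1}(\mathcal{D},\mathcal{D})$ if and only if $X$ satisfies $S_{1}(B_\Omega, B_\Omega)$.
   Context: $B(X)$ is the set of all real-valued Borel functions on $X$ with the topology of pointwise convergence. $S_1(\mathcal{A},\mathcal{B})$ means: for every sequence $(A_n:n\in\mathbb{N})$ of elements of $\mathcal{A}$ there are $b_n\in A_n$ with $\{b_n:n\in\mathbb{N}\}\in\mathcal{B}$. For the space $B(X)$, $\mathcal{D}$ is the family of all countable dense subsets of $B(X)$. A cover $\mathcal{U}$ of $X$ is an $\omega$-cover if $X\notin\mathcal{U}$ and every finite subset of $X$ is contained in some member of $\mathcal{U}$; $B_\Omega$ is the family of all countable $\omega$-covers of $X$ consisting of Borel sets. *)

From HB Require Import structures.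
From mathcomp Require Import all_boot all_order all_algebra.
From mathcomp Require Import all_classical all_reals all_analysis.
Unset Strict Implicit. Unset Printing Implicit Defensive.
Import Order.TTheory GRing.Theory Num.Theory numFieldNormedType.Exports.
Local Open Scope classical_set_scope.
Local Open Scope ring_scope.

Definition S1 {T : Type} (A B : set (set T)) : Prop :=
  forall s : nat -> set T, (forall n, A (s n)) ->
  exists b : nat -> T, (forall n, s n (b n)) /\ B (range b).

Definition pts {R : realType} (X : set R) : Type := {x : R | X x}.

Definition borelR {R : realType} : set (set R) := <<s [set U : set R | open U] >>.

(* Borel subsets of X (with the subspace topology): traces B \cap X of Borel
   sets B of R, viewed as subsets of the type pts X. *)
Definition borelX {R : realType} (X : set R) : set (set (pts X)) :=
  [set A | exists2 B, borelR B & A = (fun x : pts X => B (proj1_sig x))].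

Definition BX {R : realType} (X : set R) : set {ptws pts X -> R} :=
  [set f | forall U : set R, open U -> borelX X (f @^-1` U)].

Definition DX {R : realType} (X : set R) : set (set {ptws pts X -> R}) :=
  [set D | [/\ D `<=` BX X, countable D &
     forall W : set {ptws pts X -> R}, open W ->
       W `&` BX X !=set0 -> W `&` D !=set0]].

Definition omega_cover {T : Type} (U : set (set T)) : Prop :=
  [/\ \bigcup_(A in U) A = setT, ~ U setT &
      forall F : set T, finite_set F -> exists2 A, U A & F `<=` A].

Definition BOmega {R : realType} (X : set R) : set (set (set (pts X))) :=
  [set U | [/\ omega_cover U, countable U & U `<=` borelX X]].

From HB Require Import structures.
From mathcomp Require Import all_boot all_order all_algebra.
From mathcomp Require Import all_classical all_reals all_analysis.
Import Order.TTheory GRing.Theory Num.Theory numFieldNormedType.Exports.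
Local Open Scope classical_set_scope.
Local Open Scope ring_scope.

(* From S1(D, D) to S1(B_Omega, B_Omega): for a countable Borel omega-cover U,
   the functions equal to a rational step function on some A in U and to 0 off
   A form a countable dense subset of B(X).  A selection from these sets that
   is dense in B(X) comes within 1 of the constant function 1 on every finite
   set F, which forces F into the support A_n of the selected function, so the
   supports form an omega-cover.
   Conversely, enumerate the first dense set as (h_m).  For fixed m and radius
   r = 1/(k+1), the sets {x | |g x - h_m x| < r}, g ranging over a dense set,
   form a countable Borel omega-cover (unless one of them is X), so
   S1(B_Omega, B_Omega), applied along a subsequence of indices reserved for
   (m, k), selects functions approximating h_m on every finite set within r.
   Interleaving these countably many selections yields a dense selection. *)

Lemma finite_set_ind (T : Type) (P : set T -> Prop) : P set0 ->
  (forall F x, finite_set F -> P F -> P (x |` F)) ->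
  forall F, finite_set F -> P F.
Proof.
move=> P0 PU F /finite_set_leP [n] /pfcard_geP [->//|/surjfunPex [f ->]].
elim: n => [|n IHn]; first by rewrite II0 image_set0.
have -> : f @` `I_n.+1 = f n |` f @` `I_n.
  apply/seteqP; split.
    move=> _ [k /= kn <-]; rewrite ltnS leq_eqVlt in kn.
    by case/orP: kn => [/eqP ->|kn]; [left | right; exists k].
  move=> _ [-> | [k /= kn <-]]; first by exists n => /=.
  by exists k => //=; apply: ltnW.
by apply: PU => //; exact: finite_image.
Qed.

Section pointwise_boxes.
Context {R : realFieldType} {T : Type}.
Implicit Types (f g h : {ptws T -> R}) (F : set T) (e : R).

Definition box f F e : set {ptws T -> R} :=
  [set g | forall x, F x -> ball (f x) e (g x)].

Lemma le_box f F e1 e2 : e1 <= e2 -> box f F e1 `<=` box f F e2.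
Proof. by move=> le12 g fg x Fx; apply: le_ball le12 _ (fg x Fx). Qed.

Lemma box_triangle f g h F e1 e2 :
  box f F e1 g -> box g F e2 h -> box f F (e1 + e2) h.
Proof. by move=> fg gh x Fx; exact: ball_triangle (fg x Fx) (gh x Fx). Qed.

Lemma ptws_eval_cvg f (t : T) : (fun g : {ptws T -> R} => g t) @ f --> f t.
Proof.
have surj_t : range (fun g : {ptws T -> R} => g t) = setT.
  by apply/seteqP; split => // y _; exists (fun _ => y).
have /cvg_sup/(_ t)/(cvg_image _ _ surj_t) cvg_t : f --> f by exact: cvg_id.
move=> O /cvg_t [A nbhsA <-]; apply: filterS nbhsA => g Ag /=.
by exists g.
Qed.

Lemma nbhs_box f F e : finite_set F -> 0 < e -> nbhs f (box f F e).
Proof.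
move=> finF e0; move: F finF.
apply: (@finite_set_ind _ (fun F => nbhs f (box f F e))) => [|F x _ nbhsF].
  by apply: filterS filterT => g _ x.
have nbhs_x : nbhs f ((fun g : {ptws T -> R} => g x) @^-1` ball (f x) e).
  exact: ptws_eval_cvg (nbhsx_ballx _ _ e0).
by apply: filterS (filterI nbhsF nbhs_x) => g [gF gx] y [->|/gF].
Qed.

Lemma nbhs_ptws_box f (W : set {ptws T -> R}) : nbhs f W ->
  exists F e, [/\ finite_set F, 0 < e & box f F e `<=` W].
Proof.
pose boxes := filter_from [set Fe : set T * R | finite_set Fe.1 /\ 0 < Fe.2]
  (fun Fe => box f Fe.1 Fe.2).
have boxes_filter : Filter boxes.
  apply: filter_from_filter; first by exists (set0, 1).
  move=> [F1 e1] [F2 e2] /= [fin1 e10] [fin2 e20].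
  exists (F1 `|` F2, Num.min e1 e2).
    by split; [rewrite finite_setU | rewrite /= lt_min e10 e20].
  by move=> g /= g12; split => x Fx;
    apply: le_ball (g12 x _); rewrite ?ge_min ?lexx ?orbT //; [left | right].
have : boxes --> f.
  apply/cvg_sup => t; apply/cvg_image.
    by apply/seteqP; split => // y _; exists (fun _ => y).
  move=> A /= /nbhs_ballP [e /= e0 eA].
  exists ((fun g : {ptws T -> R} => g t) @^-1` A).
    by exists ([set t], e) => [|g /(_ t erefl)/eA//]; split => //; exact: finite_set1.
  by apply/seteqP; split => [_ [g Ag <-]//|y Ay]; exists (fun _ => y).
by move=> /(_ W) boxesW /boxesW [[F e] /= [finF e0] FeW]; exists F, e.
Qed.

End pointwise_boxes.

Arguments le_box {R T f F e1 e2}.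
Arguments box_triangle {R T f g h F e1 e2}.

Section borel_traces.
Context {R : realType} {X : set R}.
(* [borelR] is by definition the class of measurable sets of this type, so the
   closure lemmas of measurable types apply to it. *)
Local Notation borel := (g_sigma_algebraType [set U : set R | open U]).
Local Notation FT := {ptws pts X -> R}.

Definition rat_step (l : seq (rat * rat * rat)) (y : R) : R :=
  foldr (fun t v => if y \in `]ratr t.1.1, ratr t.1.2[ then ratr t.2 else v) 0 l.

Lemma borelR_rat_step_preimage l (O : set R) : borelR (rat_step l @^-1` O).
Proof.
elim: l => [|[[a b] q] l IHl].
  rewrite [_ @^-1` _](preimage_cst 0 O).
  by case: ifP => _; [exact: (@measurableT _ borel) | exact: (@measurable0 _ borel)].
set I := [set` `]ratr a, ratr b[] : set R.
have -> : rat_step ((a, b, q) :: l) @^-1` O =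
    I `&` cst (ratr q) @^-1` O `|` ~` I `&` rat_step l @^-1` O.
  apply/seteqP; split => y; rewrite /preimage /= /I /=.
    by case: ifPn => [yI Oq | /negP yI Ol]; [left | right].
  by case=> -[yI Oy]; [rewrite yI | rewrite ifN //; apply/negP].
have borelI : borelR I by apply: sub_sigma_algebra; exact: itv_open.
apply: (@measurableU _ borel); apply: (@measurableI _ borel) => //.
- rewrite preimage_cst.
  by case: ifP => _; [exact: (@measurableT _ borel) | exact: (@measurable0 _ borel)].
- exact: (@measurableC _ borel).
Qed.

Lemma rat_step_interpolation (T : Type) (u : T -> R) (f : T -> R) (F : set T)
    (e : R) : injective u -> finite_set F -> 0 < e ->
  exists l, forall x, F x -> ball (f x) e (rat_step l (u x)).
Proof.
move=> u_inj + e0; move: F.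
apply: (@finite_set_ind _ (fun F =>
  exists l, forall x, F x -> ball (f x) e (rat_step l (u x)))) => [|F x finF [l Fl]].
  by exists [::].
have [Fx|nFx] := pselect (F x); first by exists l => y [->|]; apply: Fl.
have nFux : ~ (u @` F) (u x) by move=> [y Fy /u_inj yx]; apply: nFx; rewrite -yx.
have /nbhs_ballP [d /= d0 dF] : nbhs (u x) (~` (u @` F)).
  apply: open_nbhs_nbhs; split => //; rewrite openC.
  apply: (accessible_finite_set_closed.1 (hausdorff_accessible (@Rhausdorff R))).
  exact: finite_image.
have [a] : exists a : rat, ratr a \in `]u x - d, u x[.
  by apply: rat_in_itvoo; rewrite ltrBlDr ltrDl.
rewrite in_itv /= => /andP [da ax].
have [b] : exists b : rat, ratr b \in `]u x, u x + d[.
  by apply: rat_in_itvoo; rewrite ltrDl.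
rewrite in_itv /= => /andP [xb bd].
have [q] : exists q : rat, ratr q \in `]f x - e, f x + e[.
  by apply: rat_in_itvoo; rewrite ltrD2l gtrN.
rewrite in_itv /= -ltr_distlC => fxq.
exists ((a, b, q) :: l) => y [->|Fy] /=.
  by rewrite in_itv /= ax xb.
rewrite ifN; first exact: Fl.
rewrite in_itv /=; apply/negP => /andP [ay yb].
apply: (dF (u y)); last by exists y.
by rewrite /ball /= ltr_distlC (lt_trans da ay) (lt_trans yb bd).
Qed.

Implicit Types (A : set (pts X)) (f g h : FT).

Lemma borelXT : borelX X setT.
Proof. by exists setT => //; exact: (@measurableT _ borel). Qed.

Lemma borelX0 : borelX X set0.
Proof. by exists set0 => //; exact: (@measurable0 _ borel). Qed.

Lemma borelXC A : borelX X A -> borelX X (~` A).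
Proof. by move=> [B mB ->]; exists (~` B) => //; exact: (@measurableC _ borel). Qed.

Lemma borelXI A1 A2 : borelX X A1 -> borelX X A2 -> borelX X (A1 `&` A2).
Proof.
move=> [B1 mB1 ->] [B2 mB2 ->]; exists (B1 `&` B2) => //.
exact: (@measurableI _ borel).
Qed.

Lemma borelXU A1 A2 : borelX X A1 -> borelX X A2 -> borelX X (A1 `|` A2).
Proof.
move=> [B1 mB1 ->] [B2 mB2 ->]; exists (B1 `|` B2) => //.
exact: (@measurableU _ borel).
Qed.

Lemma borelX_bigcup (I : countType) (A : I -> set (pts X)) :
  (forall i, borelX X (A i)) -> borelX X (\bigcup_i A i).
Proof.
move=> mA; have /choice [B mB] : forall i, exists B,
    borelR B /\ A i = (fun x : pts X => B (sval x)).
  by move=> i; have [B ? ?] := mA i; exists B.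
exists (\bigcup_i B i).
  apply: (@countable_bigcupT_measurable _ borel); first exact: countableP.
  by move=> i; case: (mB i).
rewrite -[RHS]/(sval @^-1` _) preimage_bigcup.
by apply: eq_bigcupr => i _; case: (mB i).
Qed.

Lemma BX_cst (c : R) : BX X (cst c).
Proof.
by move=> U _; rewrite preimage_cst; case: ifP => _; [exact: borelXT | exact: borelX0].
Qed.

Lemma BX_rat_step l : BX X (rat_step l \o sval).
Proof.
by move=> U _; exists (rat_step l @^-1` U) => //; exact: borelR_rat_step_preimage.
Qed.

Lemma BX_restrict A g : borelX X A -> BX X g -> BX X (g \_ A).
Proof.
move=> mA mg U oU; rewrite preimage_restrict.
apply: borelXU; last by apply: borelXI => //; exact: mg.
by case: ifP => _; [exact: borelXC | exact: borelX0].
Qed.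

Lemma borelX_ltB f h r : BX X f -> BX X h -> borelX X [set x | f x - h x < r].
Proof.
move=> mf mh.
have -> : [set x | f x - h x < r] =
    \bigcup_q (f @^-1` [set y | y < ratr q] `&` h @^-1` [set y | ratr q - r < y]).
  apply/seteqP; split => [x /= fhr|x [q _ [/= fq qh]]].
    have /rat_in_itvoo [q] : f x < h x + r by rewrite -ltrBlDl.
    by rewrite in_itv /= => /andP [fq qh]; exists q => //; split => //=; rewrite ltrBlDr.
  by rewrite ltrBlDl (lt_trans fq) // -ltrBlDr.
apply: borelX_bigcup => q; apply: borelXI; [apply: mf | apply: mh].
  exact: open_lt.
exact: open_gt.
Qed.

Lemma borelX_ball f h r : BX X f -> BX X h -> borelX X [set x | ball (h x) r (f x)].
Proof.
move=> mf mh; have -> : [set x | ball (h x) r (f x)] =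
    [set x | f x - h x < r] `&` [set x | h x - f x < r].
  apply/seteqP; split => x; rewrite /ball /= ltr_norml.
    by move=> /andP [hf fh]; split => //; rewrite -opprB ltrNl.
  by move=> [fh hf]; rewrite hf andbT ltrNl opprB.
by apply: borelXI; exact: borelX_ltB.
Qed.

End borel_traces.

Section dense_sets.
Context {R : realType} {X : set R}.
Local Notation FT := {ptws pts X -> R}.

Lemma DXP (D : set FT) : DX X D <-> [/\ D `<=` BX X, countable D &
  forall f, BX X f -> forall F e, finite_set F -> 0 < e ->
    exists2 d, D d & box f F e d].
Proof.
split=> -[DB cD denseD]; split=> //.
  move=> f mf F e finF e0; have := nbhs_box f F e finF e0.
  rewrite nbhsE => -[W [oW Wf] WFe].
  have [|d [Wd Dd]] := denseD W oW; first by exists f.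
  by exists d => //; exact: WFe.
move=> W oW [f [Wf mf]].
have [F [e [finF e0 FeW]]] := nbhs_ptws_box f W (open_nbhs_nbhs (conj oW Wf)).
have [d Dd fd] := denseD f mf F e finF e0.
by exists d; split => //; exact: FeW.
Qed.

Lemma DX_range (D : set FT) : DX X D -> exists h : nat -> FT, D = range h.
Proof.
move=> [_ cD denseD]; have [|d [_ Dd]] := denseD setT openT.
  by exists (cst 0); split => //; exact: BX_cst.
move/pfcard_geP: cD => [D0|/surjfunPex [h ->]]; first by rewrite D0 in Dd.
by exists h.
Qed.

End dense_sets.

Lemma interleave_selections (T : Type) (I : countType) (s : nat -> set T)
    (E : I -> nat -> T) :
  (forall n, s n !=set0) -> (forall c j, s (pickle (c, j)) (E c j)) ->
  exists b : nat -> T, (forall n, s n (b n)) /\ forall c j, b (pickle (c, j)) = E c j.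
Proof.
move=> /choice [z sz] sE.
exists (fun n => if (pickle_inv n : option (I * nat)) is Some cj then E cj.1 cj.2 else z n).
split=> [n|c j]; last by rewrite pickleK_inv.
have := @pickle_invK (I * nat)%type n.
by case: (pickle_inv n) => [[c j] /= <-|_]; [exact: sE | exact: sz].
Qed.

Section selection_principles.
Context {R : realType} {X : set R}.
Local Notation FT := {ptws pts X -> R}.

Lemma DX_neq0 (D : set FT) : DX X D -> D !=set0.
Proof. by move=> /DX_range [h ->]; exists (h 0%N), 0%N. Qed.

Definition close_set (h : FT) (r : R) (g : FT) : set (pts X) :=
  [set x | ball (h x) r (g x)].

Lemma BOmega_close_sets (D : set FT) h r : DX X D -> BX X h -> 0 < r ->
  (forall g, D g -> close_set h r g <> setT) -> BOmega X (close_set h r @` D).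
Proof.
move=> DD mh r0 notT; have [DB cD denseD] := (DXP D).1 DD.
have cover F : finite_set F -> exists2 A, (close_set h r @` D) A & F `<=` A.
  by move=> finF; have [g Dg hg] := denseD h mh F r finF r0; exists (close_set h r g).
split; first split.
- apply/seteqP; split=> // x _; have [A DA Ax] := cover [set x] (finite_set1 x).
  by exists A => //; exact: Ax.
- by move=> [g Dg /notT].
- exact: cover.
- exact: card_le_trans (card_image_le _ _) cD.
- by move=> _ [g Dg <-]; apply: borelX_ball => //; exact: DB.
Qed.

Lemma S1_BOmega_box_selection : S1 (BOmega X) (BOmega X) ->
  forall t : nat -> set FT, (forall j, DX X (t j)) -> forall h r, BX X h -> 0 < r ->
  exists e : nat -> FT, (forall j, t j (e j)) /\
    forall F, finite_set F -> exists j, box h F r (e j).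
Proof.
move=> S1X t Dt h r mh r0.
have [[j [g tg gT]]|noT] := pselect (exists j, exists2 g, t j g & close_set h r g = setT).
  have /choice [z tz] : forall i, t i !=set0 by move=> i; exact: DX_neq0.
  exists (fun i => if i == j then g else z i); split=> [i|F _].
    by case: eqP => [->|_].
  by exists j; rewrite eqxx => x _; have : close_set h r g x by rewrite gT.
have BOt j : BOmega X (close_set h r @` t j).
  by apply: BOmega_close_sets => // g tg gT; apply: noT; exists j, g.
have [A [tA [[_ _ coverA] _ _]]] := S1X _ BOt.
have /choice [e He] : forall j, exists g, t j g /\ close_set h r g = A j.
  by move=> j; have [g tg <-] := tA j; exists g.
exists e; split=> [j|F finF]; first by case: (He j).
have [_ [j _ <-] FA] := coverA F finF.
by exists j => x /FA; case: (He j) => _ <-.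
Qed.

Lemma S1_DX_of_S1_BOmega : S1 (BOmega X) (BOmega X) -> S1 (DX X) (DX X).
Proof.
move=> S1X s Ds; have [h s0h] := DX_range _ (Ds 0%N).
have /choice [E Esel] : forall c : nat * nat, exists e : nat -> FT,
    (forall j, s (pickle (c, j)) (e j)) /\
    forall F, finite_set F -> exists j, box (h c.1) F c.2.+1%:R^-1 (e j).
  move=> [m k].
  apply: (S1_BOmega_box_selection S1X (fun j => s (pickle ((m, k), j)))) => //=.
  by have [DB _ _] := Ds 0%N; apply: DB; rewrite s0h; exists m.
have [|b [sb bE]] := @interleave_selections _ _ s E _ (fun c j => (Esel c).1 j).
  by move=> n; exact: DX_neq0.
exists b; split=> //; apply/DXP; split.
- by move=> _ [n _ <-]; have [DB _ _] := Ds n; exact: DB.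
- exact: card_le_trans (card_image_le _ _) (countableP _).
move=> f mf F e finF e0; have e20 : 0 < e / 2 by rewrite divr_gt0.
have [_ [m _ <-] fhm] : exists2 d, range h d & box f F (e / 2) d.
  by rewrite -s0h; have [_ _ dense0] := (DXP _).1 (Ds 0%N); exact: dense0.
pose k := Num.Def.trunc (e / 2)^-1.
have ke : k.+1%:R^-1 <= e / 2.
  by rewrite -[e / 2]invrK lef_pV2 ?posrE ?invr_gt0 //; exact/ltW/truncnS_gt.
have [j hmE] := (Esel (m, k)).2 F finF.
exists (b (pickle ((m, k), j))); first by exists (pickle ((m, k), j)).
by rewrite bE (splitr e); exact: box_triangle fhm (le_box ke _ hmE).
Qed.

(* [g \_ A] extends [g] outside [A] by [point], which is [0] in [R]. *)
Definition step_patches (U : set (set (pts X))) : set FT :=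
  [set (rat_step Al.2 \o sval) \_ Al.1 | Al in U `*` [set: seq (rat * rat * rat)]].

Lemma DX_step_patches U : BOmega X U -> DX X (step_patches U).
Proof.
move=> [[_ _ coverU] cU borelU]; apply/DXP; split.
- move=> _ [[A l] [/= UA _] <-].
  by apply: BX_restrict; [exact: borelU | exact: BX_rat_step].
- apply: card_le_trans (card_image_le _ _) _.
  by apply: countableX; [exact: cU | exact: countableP].
move=> f _ F e finF e0; have [A UA FA] := coverU F finF.
have sval_inj : injective (@sval R X) by move=> [x ?] [y ?] /= xy; exact: eq_exist.
have [l Fl] := rat_step_interpolation _ sval f F e sval_inj finF e0.
exists ((rat_step l \o sval) \_ A); first by exists (A, l).
by move=> x Fx; rewrite patchE mem_set; [exact: Fl | exact: FA].
Qed.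

Lemma BOmega_patch_supports (U : nat -> set (set (pts X)))
    (A : nat -> set (pts X)) (l : nat -> seq (rat * rat * rat)) :
  (forall n, BOmega X (U n)) -> (forall n, U n (A n)) ->
  DX X (range (fun n => (rat_step (l n) \o sval) \_ (A n))) -> BOmega X (range A).
Proof.
move=> BU UA /DXP [_ _ denseA].
have cover F : finite_set F -> exists2 B, range A B & F `<=` B.
  move=> finF; have [_ [n _ <-] near1] := denseA (cst 1) (BX_cst 1) F 1 finF ltr01.
  exists (A n); first by exists n.
  move=> x /near1; rewrite patchE; case: ifPn => [/set_mem //|_].
  by rewrite /ball /= subr0 normr1 ltxx.
split; first split.
- apply/seteqP; split=> // x _; have [B AB Bx] := cover [set x] (finite_set1 x).
  by exists B => //; exact: Bx.
- by move=> [n _ AnT]; have [[_ + _] _ _] := BU n; apply; rewrite -AnT.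
- exact: cover.
- exact: card_le_trans (card_image_le _ _) (countableP _).
- by move=> _ [n _ <-]; have [_ _ borelU] := BU n; exact: borelU.
Qed.

Lemma S1_BOmega_of_S1_DX : S1 (DX X) (DX X) -> S1 (BOmega X) (BOmega X).
Proof.
move=> S1D U BU.
have [d [Ud Dd]] :=
  S1D (fun n => step_patches (U n)) (fun n => DX_step_patches _ (BU n)).
have /choice [Al HAl] : forall n, exists Al : set (pts X) * seq (rat * rat * rat),
    U n Al.1 /\ d n = (rat_step Al.2 \o sval) \_ Al.1.
  by move=> n; have [[A l] [/= UA _] <-] := Ud n; exists (A, l).
exists (fun n => (Al n).1); split=> [n|]; first by case: (HAl n).
apply: (@BOmega_patch_supports U _ (fun n => (Al n).2) BU) => [n|]; first by case: (HAl n).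
by rewrite (_ : (fun n => _) = d) //; apply/funext => n; case: (HAl n) => _ ->.
Qed.

End selection_principles.

Theorem theorem3p3 (R : realType) (X : set R) :
  S1 (DX X) (DX X) <-> S1 (BOmega X) (BOmega X).
Proof. by split; [exact: S1_BOmega_of_S1_DX | exact: S1_DX_of_S1_BOmega]. Qed.
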